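(* Fix a block length $N>0$, transmission rates $R_1,R_2\ge 0$, transmit powers $P_1,P_2>0$ and noise powers $\sigma_1^2,\sigma_2^2>0$. For channel gains $g_1=|h_1|^2>0$ and $g_2=|h_2|^2>0$ define the SINRs/SNR $$\gamma_2^1=\frac{g_1P_2}{g_1P_1+\sigma_1^2},\qquad \gamma_1^1=\frac{g_1P_1}{\sigma_1^2},\qquad {\gamma_1^1}'=\frac{g_1P_1}{g_1P_2+\sigma_1^2},\qquad \gamma_2^2=\frac{g_2P_2}{g_2P_1+\sigma_2^2},$$ the (approximate) decoding error probabilities $$\epsilon_2^1=Q(f(\gamma_2^1,N,R_2)),\quad \epsilon_1^1=Q(f(\gamma_1^1,N,R_1)),\quad {\epsilon_1^1}'=Q(f({\gamma_1^1}',N,R_1)),\quad \epsilon_2=Q(f(\gamma_2^2,N,R_2)),$$ the effective decoding error probability at user 1 $$\epsilon_1=\begin{cases}\epsilon_1^1(1-\epsilon_2^1)+{\epsilon_1^1}'\epsilon_2^1, & R_1\le \log_2(1+{\gamma_1^1}'),\\ \epsilon_1^1(1-\epsilon_2^1)+\epsilon_2^1, & \log_2(1+{\gamma_1^1}')\le R_1\le \log_2(1+\gamma_1^1),\end{cases}$$ and the effective throughputs $T_1=R_1(1-\epsilon_1)$ and $T_2=R_2(1-\epsilon_2)$. Then, with all other variables fixed, $T_1$ is a monotonically increasing function of the channel gain $g_1=|h_1|^2$ (wherever $T_1$ is defined, i.e. $R_1\le\log_2(1+\gamma_1^1)$), and $T_2$ is a monotonically increasing function of the channel gain $g_2=|h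_2|^2$.
   Context: $Q(x)=\frac{1}{\sqrt{2\pi}}\int_x^\infty e^{-t^2/2}\,dt$ is the Gaussian tail function, and $f(x,y,z)=\ln 2\,\sqrt{\frac{y}{1-(1+x)^{-2}}}\,\bigl(\log_2(1+x)-z\bigr)$ for $x>0$. Setting: a two-user downlink NOMA short-packet system in which an access point sends superposed symbols with powers $P_1$ (to user 1, the stronger user, which performs successive interference cancellation) and $P_2$ (to user 2) at rates $R_1,R_2$ over blocks of length $N$; $h_i$ is the channel coefficient to user $i$ and $\sigma_i^2$ the noise power at user $i$. *)

From Stdlib Require Import Reals.
From Coquelicot Require Import Coquelicot.
Open Scope R_scope.

Definition Qfun (x : R) : R :=
  / sqrt (2 * PI) *
  RInt_gen (fun t => exp (- (t ^ 2) / 2)) (at_point x) (Rbar_locally p_infty).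

Definition log2 (x : R) : R := ln x / ln 2.

Definition ffun (x y z : R) : R :=
  ln 2 * sqrt (y / (1 - / ((1 + x) ^ 2))) * (log2 (1 + x) - z).

Section Model.
Variables (N R1 R2 P1 P2 s1 s2 : R).

Definition gamma21 (g1 : R) : R := g1 * P2 / (g1 * P1 + s1).
Definition gamma11 (g1 : R) : R := g1 * P1 / s1.
Definition gamma11' (g1 : R) : R := g1 * P1 / (g1 * P2 + s1).
Definition gamma22 (g2 : R) : R := g2 * P2 / (g2 * P1 + s2).

Definition eps21 (g1 : R) : R := Qfun (ffun (gamma21 g1) N R2).
Definition eps11 (g1 : R) : R := Qfun (ffun (gamma11 g1) N R1).
Definition eps11' (g1 : R) : R := Qfun (ffun (gamma11' g1) N R1).
Definition eps2 (g2 : R) : R := Qfun (ffun (gamma22 g2) N R2).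

(* Effective error at user 1: first case when R1 <= log2(1+gamma11'),
   second case otherwise (meaningful when R1 <= log2(1+gamma11)). *)
Definition eps1 (g1 : R) : R :=
  if Rle_dec R1 (log2 (1 + gamma11' g1))
  then eps11 g1 * (1 - eps21 g1) + eps11' g1 * eps21 g1
  else eps11 g1 * (1 - eps21 g1) + eps21 g1.

Definition T1 (g1 : R) : R := R1 * (1 - eps1 g1).
Definition T2 (g2 : R) : R := R2 * (1 - eps2 g2).
End Model.

From Pilot Require Import Defs.
From Stdlib Require Import Reals Lra Classical.
From Coquelicot Require Import Coquelicot.
From mathcomp Require all_boot all_algebra all_classical all_reals all_analysis.
From mathcomp Require Rstruct Rstruct_topology measurable_realfun.
Open Scope R_scope.

(* Every error probability is Q(f(gamma, N, R)) with gamma an SINR or SNR that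
   grows with the channel gain.  Writing u = 1 + gamma,
   f(gamma, N, R) = sqrt N * u (ln u - R ln 2) / sqrt (u^2 - 1), whose derivative
   in u has the sign of u^2 - 1 - ln u + R ln 2 > 0; as Q is antitone, every error
   probability decreases with the gain.  The effective error of user 1 is the
   mixture eps11 (1 - eps21) + eps21 c, with c = eps11' or c = 1 according to the
   regime; it is nondecreasing in eps11, eps21 and c as long as eps11 <= c and
   eps21 <= 1, and a larger gain can only switch the regime from c = 1 to
   c = eps11'.  The bound Q <= 1 is the Gaussian integral, taken from
   MathComp-Analysis by comparing Lebesgue and Riemann integrals. *)

Lemma ex_RInt_continuity (f : R -> R) (a b : R) :
  (forall x, continuity_pt f x) -> ex_RInt f a b.
Proof.
intros cf; apply (@ex_RInt_continuous R_CompleteNormedModule); intros z _.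
apply continuity_pt_filterlim, cf.
Qed.

Lemma derivable_pt_lim_RInt (f : R -> R) (a x : R) :
  (forall x, continuity_pt f x) -> derivable_pt_lim (RInt f a) x (f x).
Proof.
intros cf; apply is_derive_Reals, (is_derive_RInt f (RInt f a) a).
- apply filter_forall; intros y.
  apply (@RInt_correct R_CompleteNormedModule), ex_RInt_continuity, cf.
- apply continuity_pt_filterlim, cf.
Qed.

Module LebesgueBridge.
Import all_boot all_algebra all_classical all_reals all_analysis Rstruct Rstruct_topology measurable_realfun.
Import GRing.Theory Num.Theory.
Local Open Scope classical_set_scope.
Local Open Scope ring_scope.

Lemma derivable_pt_lim_derive (F : R^o -> R^o) (x l : R^o) :
  derivable_pt_lim F x l -> derivable F x 1 /\ 'D_1 F x = l.
Proof.
move=> HF.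
have quotient_cvg : (fun h : R^o => h^-1 *: (F (h *: 1 + x) - F x)) @ 0^' --> l.
  apply/cvgrPdist_lt => e /RltP e0.
  have [d Hd] := HF e e0.
  exists (pos d) => /=; first by apply/RltP; exact: (cond_pos d).
  move=> h /= hd hne0.
  rewrite sub0r normrN in hd.
  have hne0' : h <> 0 by apply/eqP.
  have hd' : (Rabs h < d)%coqR by apply/RltP.
  have := Hd h hne0' hd'.
  rewrite !RealsE => /RltP.
  by rewrite distrC mulrC (addrC x) /GRing.scale /= mulr1.
split; first by apply/cvg_ex; exists l.
exact/cvg_lim.
Qed.

Lemma integral_itv_antiderivative (f F : R^o -> R^o) (a b : R^o) : (a < b)%coqR ->
  (forall x, continuity_pt f x) -> (forall x, derivable_pt_lim F x (f x)) ->
  (\int[@lebesgue_measure R]_(x in `[a, b]) (f x)%:E = (F b - F a)%:E)%E.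
Proof.
move=> /RltP ab cf dF.
have cF x : {for x, continuous F}.
  apply/continuity_pt_cvg/derivable_continuous_pt; exists (f x); exact: dF.
rewrite EFinB; apply: continuous_FTC2 => //.
- apply: continuous_subspaceT => x; exact/continuity_pt_cvg.
- split.
  + move=> x _; exact (derivable_pt_lim_derive _ _ _ (dF x)).1.
  + apply: cvg_at_right_filter; exact: cF.
  + apply: cvg_at_left_filter; exact: cF.
- move=> x _; rewrite derive1E; exact (derivable_pt_lim_derive _ _ _ (dF x)).2.
Qed.

Lemma integral_itv_RInt (f : R^o -> R^o) (a b : R^o) : (a < b)%coqR ->
  (forall x, continuity_pt f x) ->
  (\int[@lebesgue_measure R]_(x in `[a, b]) (f x)%:E = (RInt f a b)%:E)%E.
Proof.
move=> ab cf.
have dF x := derivable_pt_lim_RInt f a x cf.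
by rewrite (integral_itv_antiderivative _ _ _ _ ab cf dF) RInt_point subr0.
Qed.

(* Both constants are four times the integral of 1 / (1 + x^2) over [0, 1]. *)
Lemma pi_PI : (pi : R) = PI.
Proof.
pose f x := Rinv (1 + x ^ 2)%coqR.
have f_cont x : continuity_pt f x.
  apply: continuity_pt_inv; first by rewrite /f; reg.
  have := pow2_ge_0 x; lra.
have fE : f = fun x => (1 + x ^+ 2)^-1 by apply/funext => x; rewrite /f RinvE RpowE.
have := integral_itv_antiderivative _ _ _ _ Rlt_0_1 f_cont derivable_pt_lim_atan.
have -> : (\int[@lebesgue_measure R]_(x in `[0%R, 1%R]) (f x)%:E =
    (trigo.atan 1 - trigo.atan 0)%:E)%E.
  rewrite fE; apply: continuous_FTC2 => //.
  - apply: continuous_subspaceT => x.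
    by have := f_cont x; rewrite continuity_pt_cvg fE.
  - split.
    + move=> x _; exact: derivable_atan.
    + apply: cvg_at_right_filter; exact: continuous_atan.
    + apply: cvg_at_left_filter; exact: continuous_atan.
  - move=> x _; exact: derive1_atan.
rewrite atan_1 atan_0 atan1 atan0 => -[] /eqP.
rewrite !RealsE !subr0 /= => /eqP h.
by rewrite -[LHS](divfK (_ : 4%:R != 0)) ?h ?divfK ?pnatr_eq0.
Qed.

Lemma std_normal_pdfE (x : R) :
  normal_pdf 0 1 x = (/ sqrt (2 * PI) * exp (- (x ^ 2) / 2))%coqR.
Proof.
rewrite /normal_pdf oner_eq0 /normal_peak /normal_fun -pi_PI !RealsE /=.
by rewrite expr1n mul1r subr0 -mulr_natl.
Qed.

Lemma RInt_std_normal_le1 (a b : R) : (a <= b)%coqR ->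
  (RInt (fun t => / sqrt (2 * PI) * exp (- (t ^ 2) / 2)) a b <= 1)%coqR.
Proof.
case/Rle_lt_or_eq_dec => [ab|<-]; last by rewrite RInt_point; exact: Rle_0_1.
apply/RleP; rewrite -lee_fin -integral_itv_RInt //; last by move=> x; reg.
under eq_integral do rewrite -std_normal_pdfE.
rewrite -(integral_normal_pdf 0 1); apply: ge0_subset_integral => //=.
- apply/measurable_EFinP; exact: measurable_normal_pdf.
- by move=> x _; rewrite lee_fin normal_pdf_ge0.
Qed.

End LebesgueBridge.

Section TailIntegral.

Variable f : R -> R.
Hypothesis f_cont : forall x, continuity_pt f x.
Hypothesis f_ge0 : forall x, 0 <= f x.
Variable M : R.
Hypothesis RInt_le_M : forall a b, a <= b -> RInt f a b <= M.

Let F (b : R) : R := RInt f 0 b.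

Let RInt_F (a b : R) : RInt f a b = F b - F a.
Proof.
unfold F.
pose proof (RInt_Chasles (V := R_CompleteNormedModule) f 0 a b
  (ex_RInt_continuity f 0 a f_cont) (ex_RInt_continuity f a b f_cont)) as H.
change (RInt f 0 a + RInt f a b = RInt f 0 b) in H; lra.
Qed.

Let F_incr (a b : R) : a <= b -> F a <= F b.
Proof.
intros ab.
assert (0 <= RInt f a b)
  by (apply RInt_ge_0; [exact ab | apply ex_RInt_continuity, f_cont | intros; apply f_ge0]).
rewrite RInt_F in H; lra.
Qed.

Let F_le (x b : R) : F b <= F x + M.
Proof.
destruct (Rle_or_lt x b) as [xb | bx].
- pose proof (RInt_le_M x b xb); rewrite RInt_F in H; lra.
- assert (0 <= M) by (pose proof (RInt_le_M x x (Rle_refl x)) as H;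
    rewrite RInt_point in H; exact H).
  pose proof (F_incr b x (Rlt_le _ _ bx)); lra.
Qed.

Let range_F (y : R) : Prop := exists b, y = F b.

Let range_F_bound : bound range_F.
Proof. exists (F 0 + M); intros y [b ->]; apply F_le. Qed.

Let range_F_inhabited : exists y, range_F y.
Proof. exists (F 0), 0; reflexivity. Qed.

(* [L] is the integral of [f] over [0, +oo), so the tail beyond [x] is [L - F x]. *)
Let L : R := proj1_sig (completeness range_F range_F_bound range_F_inhabited).

Let L_lub : is_lub range_F L.
Proof. unfold L; destruct completeness as [m Hm]; exact Hm. Qed.

Let F_le_L (b : R) : F b <= L.
Proof. apply L_lub; exists b; reflexivity. Qed.

Let L_le (x : R) : L <= F x + M.
Proof. apply L_lub; intros y [b ->]; apply F_le. Qed.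

Let L_approx (eps : R) : 0 < eps -> exists b, L - eps < F b.
Proof.
intros Heps; apply not_all_not_ex; intros Hn.
assert (L <= L - eps) by (apply L_lub; intros y [b ->]; specialize (Hn b); lra).
lra.
Qed.

Let RInt_gen_tail (x : R) : RInt_gen f (at_point x) (Rbar_locally p_infty) = L - F x.
Proof.
apply (is_RInt_gen_unique (V := R_CompleteNormedModule)).
intros P [eps HP].
destruct (L_approx eps (cond_pos eps)) as [b0 Hb0].
apply (Filter_prod _ _ _ (fun a => a = x) (fun b => b0 < b)).
- reflexivity.
- exists b0; intros; assumption.
- intros a b -> Hb; exists (RInt f x b); split.
  + apply (@RInt_correct R_CompleteNormedModule), ex_RInt_continuity, f_cont.
  + apply HP; rewrite RInt_F.
    pose proof (F_incr b0 b (Rlt_le _ _ Hb)); pose proof (F_le_L b).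
    change (Rabs ((F b - F x) - (L - F x)) < eps).
    apply Rabs_def1; lra.
Qed.

Lemma RInt_gen_tail_ge0 (x : R) : 0 <= RInt_gen f (at_point x) (Rbar_locally p_infty).
Proof. rewrite RInt_gen_tail; pose proof (F_le_L x); lra. Qed.

Lemma RInt_gen_tail_le (x : R) : RInt_gen f (at_point x) (Rbar_locally p_infty) <= M.
Proof. rewrite RInt_gen_tail; pose proof (L_le x); lra. Qed.

Lemma RInt_gen_tail_antitone (x y : R) : x <= y ->
  RInt_gen f (at_point y) (Rbar_locally p_infty) <=
  RInt_gen f (at_point x) (Rbar_locally p_infty).
Proof. intros xy; rewrite !RInt_gen_tail; pose proof (F_incr x y xy); lra. Qed.

End TailIntegral.

Lemma gauss_cont (x : R) : continuity_pt (fun t => exp (- (t ^ 2) / 2)) x.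
Proof. reg. Qed.

Lemma gauss_ge0 (t : R) : 0 <= exp (- (t ^ 2) / 2).
Proof. left; apply exp_pos. Qed.

Lemma sqrt_2PI_pos : 0 < sqrt (2 * PI).
Proof. apply sqrt_lt_R0; pose proof PI_RGT_0; lra. Qed.

Lemma RInt_gauss_le (a b : R) : a <= b ->
  RInt (fun t => exp (- (t ^ 2) / 2)) a b <= sqrt (2 * PI).
Proof.
intros ab.
pose proof (LebesgueBridge.RInt_std_normal_le1 a b ab) as H.
rewrite (RInt_scal (V := R_CompleteNormedModule) (fun t => exp (- (t ^ 2) / 2)))
  in H by (apply ex_RInt_continuity, gauss_cont).
change (/ sqrt (2 * PI) * RInt (fun t => exp (- (t ^ 2) / 2)) a b <= 1) in H.
pose proof sqrt_2PI_pos.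
apply (Rmult_le_reg_l (/ sqrt (2 * PI))); [apply Rinv_0_lt_compat; lra|].
rewrite Rinv_l; lra.
Qed.

Lemma Qfun_ge0 (x : R) : 0 <= Qfun x.
Proof.
unfold Qfun; pose proof sqrt_2PI_pos.
apply Rmult_le_pos; [left; apply Rinv_0_lt_compat; lra|].
apply RInt_gen_tail_ge0 with (sqrt (2 * PI));
  [exact gauss_cont | exact gauss_ge0 | exact RInt_gauss_le].
Qed.

Lemma Qfun_le1 (x : R) : Qfun x <= 1.
Proof.
unfold Qfun; pose proof sqrt_2PI_pos.
rewrite <- (Rinv_l (sqrt (2 * PI))) by lra.
apply Rmult_le_compat_l; [left; apply Rinv_0_lt_compat; lra|].
apply RInt_gen_tail_le; [exact gauss_cont | exact gauss_ge0 | exact RInt_gauss_le].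
Qed.

Lemma Qfun_antitone (x y : R) : x <= y -> Qfun y <= Qfun x.
Proof.
intros xy; unfold Qfun; pose proof sqrt_2PI_pos.
apply Rmult_le_compat_l; [left; apply Rinv_0_lt_compat; lra|].
apply RInt_gen_tail_antitone with (sqrt (2 * PI));
  [exact gauss_cont | exact gauss_ge0 | exact RInt_gauss_le | exact xy].
Qed.

Definition dispersion_gap (c u : R) : R := u * (ln u - c) / sqrt (u * u - 1).

Lemma ln_lt_sub1 (u : R) : 1 < u -> ln u < u - 1.
Proof.
intros Hu.
assert (H0 : 0 < ln u) by (rewrite <- ln_1; apply ln_increasing; lra).
pose proof (exp_ineq1 (ln u) (Rgt_not_eq _ _ H0)) as H.
rewrite exp_ln in H by lra; lra.
Qed.

Lemma is_derive_dispersion_gap (c u : R) : 1 < u ->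
  is_derive (dispersion_gap c) u
    ((u * u - 1 - ln u + c) / (sqrt (u * u - 1) * sqrt (u * u - 1) * sqrt (u * u - 1))).
Proof.
intros Hu; unfold dispersion_gap.
assert (Hs : 0 < sqrt (u * u - 1)) by (apply sqrt_lt_R0; nra).
assert (Hss : sqrt (u * u - 1) * sqrt (u * u - 1) = u * u - 1) by (apply sqrt_sqrt; nra).
auto_derive.
- change (u * u + - (1)) with (u * u - 1); repeat split; try lra; nra.
- change (u * u + - (1)) with (u * u - 1).
  set (s := sqrt (u * u - 1)) in *; clearbody s.
  transitivity ((u * u - 1 - ln u + c) / (s * s * s)
                + (ln u - c + 1) * (s * s - (u * u - 1)) / (s * s * s)).
  + field; split; lra.
  + replace (s * s - (u * u - 1)) with 0 by lra; field; lra.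
Qed.

Lemma dispersion_gap_incr (c u v : R) : 0 <= c -> 1 < u -> u <= v ->
  dispersion_gap c u <= dispersion_gap c v.
Proof.
intros Hc Hu Huv.
destruct (Rle_lt_or_eq_dec _ _ Huv) as [H | <-]; [left | lra].
apply (incr_function (dispersion_gap c) 1 p_infty
  (fun u => (u * u - 1 - ln u + c) /
            (sqrt (u * u - 1) * sqrt (u * u - 1) * sqrt (u * u - 1))));
  simpl; auto; try lra.
- intros x Hx _; apply is_derive_dispersion_gap, Hx.
- intros x Hx _.
  assert (Hs : 0 < sqrt (x * x - 1)) by (apply sqrt_lt_R0; nra).
  pose proof (ln_lt_sub1 x Hx).
  apply Rdiv_lt_0_compat; [nra|].
  repeat apply Rmult_lt_0_compat; assumption.
Qed.

Lemma ffun_dispersion_gap (x y z : R) : 0 < x -> 0 <= y ->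
  ffun x y z = sqrt y * dispersion_gap (z * ln 2) (1 + x).
Proof.
intros Hx Hy; unfold ffun, dispersion_gap, log2.
set (u := 1 + x).
assert (Hu : 1 < u) by (unfold u; lra).
clearbody u.
assert (Hs : 0 < sqrt (u * u - 1)) by (apply sqrt_lt_R0; nra).
assert (Hss : sqrt (u * u - 1) * sqrt (u * u - 1) = u * u - 1) by (apply sqrt_sqrt; nra).
assert (Hl2 : 0 < ln 2) by (rewrite <- ln_1; apply ln_increasing; lra).
replace (y / (1 - / u ^ 2))
  with (y * ((u / sqrt (u * u - 1)) * (u / sqrt (u * u - 1)))).
2:{ replace ((u / sqrt (u * u - 1)) * (u / sqrt (u * u - 1)))
      with (u * u / (sqrt (u * u - 1) * sqrt (u * u - 1))) by (field; lra).
    rewrite Hss; field; split; nra. }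
rewrite sqrt_mult, sqrt_square by (try apply Rlt_le, Rdiv_lt_0_compat; nra).
field; split; lra.
Qed.

Lemma ffun_incr (x x' y z : R) : 0 < x -> x <= x' -> 0 <= y -> 0 <= z ->
  ffun x y z <= ffun x' y z.
Proof.
intros Hx Hxx Hy Hz.
rewrite !ffun_dispersion_gap by lra.
apply Rmult_le_compat_l; [apply sqrt_pos|].
assert (0 < ln 2) by (rewrite <- ln_1; apply ln_increasing; lra).
apply dispersion_gap_incr; nra.
Qed.

Lemma Qfun_ffun_antitone (x x' y z : R) : 0 < x -> x <= x' -> 0 <= y -> 0 <= z ->
  Qfun (ffun x' y z) <= Qfun (ffun x y z).
Proof. intros; apply Qfun_antitone, ffun_incr; assumption. Qed.

Lemma sinr_pos (a b s g : R) : 0 < a -> 0 <= b -> 0 < s -> 0 < g ->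
  0 < g * a / (g * b + s).
Proof. intros; apply Rdiv_lt_0_compat; nra. Qed.

Lemma sinr_incr (a b s g g' : R) : 0 <= a -> 0 <= b -> 0 < s -> 0 <= g -> g <= g' ->
  g * a / (g * b + s) <= g' * a / (g' * b + s).
Proof.
intros Ha Hb Hs Hg Hgg.
assert (0 < g * b + s) by nra.
assert (0 < g' * b + s) by nra.
assert (0 <= g' * a / (g' * b + s) - g * a / (g * b + s)); [|lra].
replace (g' * a / (g' * b + s) - g * a / (g * b + s))
  with ((g' - g) * a * s / ((g * b + s) * (g' * b + s))) by (field; lra).
apply Rdiv_le_0_compat; [apply Rmult_le_pos; nra | nra].
Qed.

Lemma snr_incr (a s g g' : R) : 0 <= a -> 0 < s -> g <= g' -> g * a / s <= g' * a / s.
Proof.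
intros Ha Hs Hgg; unfold Rdiv.
apply Rmult_le_compat_r; [left; apply Rinv_0_lt_compat, Hs | nra].
Qed.

Lemma sinr_le_snr (a b s g : R) : 0 <= a -> 0 <= b -> 0 < s -> 0 <= g ->
  g * a / (g * b + s) <= g * a / s.
Proof.
intros Ha Hb Hs Hg; unfold Rdiv.
apply Rmult_le_compat_l; [nra|].
apply Rinv_le_contravar; nra.
Qed.

Lemma mixture_le (a b c a' b' c' : R) :
  a' <= a -> 0 <= b' <= b -> b <= 1 -> a' <= c' <= c ->
  a' * (1 - b') + b' * c' <= a * (1 - b) + b * c.
Proof.
intros Ha Hb Hb1 Hc.
assert (0 <= (b - b') * (c' - a')) by (apply Rmult_le_pos; lra).
assert (0 <= (a - a') * (1 - b)) by (apply Rmult_le_pos; lra).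
assert (0 <= b * (c - c')) by (apply Rmult_le_pos; lra).
nra.
Qed.

Section UserOne.

Variables (N R1 R2 P1 P2 s1 : R).
Hypotheses (HN : 0 <= N) (HR1 : 0 <= R1) (HR2 : 0 <= R2)
  (HP1 : 0 < P1) (HP2 : 0 < P2) (Hs1 : 0 < s1).

Definition eps11_interf (g : R) : R :=
  if Rle_dec R1 (log2 (1 + gamma11' P1 P2 s1 g)) then eps11' N R1 P1 P2 s1 g else 1.

Lemma eps1_mixture (g : R) :
  eps1 N R1 R2 P1 P2 s1 g =
  eps11 N R1 P1 s1 g * (1 - eps21 N R2 P1 P2 s1 g)
  + eps21 N R2 P1 P2 s1 g * eps11_interf g.
Proof. unfold eps1, eps11_interf; destruct Rle_dec; ring. Qed.

Lemma eps11_le_interf (g : R) : 0 < g -> eps11 N R1 P1 s1 g <= eps11_interf g.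
Proof.
intros Hg; unfold eps11_interf; destruct Rle_dec; [|apply Qfun_le1].
apply Qfun_ffun_antitone; auto.
- apply sinr_pos; lra.
- apply sinr_le_snr; lra.
Qed.

Lemma eps11_interf_antitone (g g' : R) : 0 < g -> g <= g' ->
  eps11_interf g' <= eps11_interf g.
Proof.
intros Hg Hgg; unfold eps11_interf.
assert (Hmono : gamma11' P1 P2 s1 g <= gamma11' P1 P2 s1 g') by (apply sinr_incr; lra).
assert (Hpos : 0 < gamma11' P1 P2 s1 g) by (apply sinr_pos; lra).
destruct (Rle_dec R1 (log2 (1 + gamma11' P1 P2 s1 g'))) as [H' | H'];
  destruct (Rle_dec R1 (log2 (1 + gamma11' P1 P2 s1 g))) as [H | H].
- apply Qfun_ffun_antitone; auto.
- apply Qfun_le1.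
- exfalso; apply H'; eapply Rle_trans; [exact H|].
  unfold log2, Rdiv; apply Rmult_le_compat_r.
  + left; apply Rinv_0_lt_compat; rewrite <- ln_1; apply ln_increasing; lra.
  + destruct (Rle_lt_or_eq_dec _ _ Hmono) as [Hlt | ->]; [|lra].
    left; apply ln_increasing; lra.
- lra.
Qed.

Lemma eps1_antitone (g g' : R) : 0 < g -> g <= g' ->
  eps1 N R1 R2 P1 P2 s1 g' <= eps1 N R1 R2 P1 P2 s1 g.
Proof.
intros Hg Hgg.
assert (Hg' : 0 < g') by lra.
rewrite !eps1_mixture; apply mixture_le.
- apply Qfun_ffun_antitone; auto; [apply Rdiv_lt_0_compat; nra | apply snr_incr; lra].
- split; [apply Qfun_ge0|].
  apply Qfun_ffun_antitone; auto; [apply sinr_pos | apply sinr_incr]; lra.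
- apply Qfun_le1.
- split; [apply eps11_le_interf, Hg' | apply eps11_interf_antitone; assumption].
Qed.

End UserOne.

Lemma eps2_antitone (N R2 P1 P2 s2 g g' : R) :
  0 <= N -> 0 <= R2 -> 0 < P1 -> 0 < P2 -> 0 < s2 -> 0 < g -> g <= g' ->
  Defs.eps2 N R2 P1 P2 s2 g' <= Defs.eps2 N R2 P1 P2 s2 g.
Proof.
intros; apply Qfun_ffun_antitone; auto; [apply sinr_pos | apply sinr_incr]; lra.
Qed.

Theorem proposition1 (N : nat) (R1 R2 P1 P2 s1 s2 : R) :
  (0 < N)%nat -> 0 <= R1 -> 0 <= R2 -> 0 < P1 -> 0 < P2 -> 0 < s1 -> 0 < s2 ->
  (forall g1 g1' : R, 0 < g1 -> g1 <= g1' ->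
     R1 <= log2 (1 + gamma11 P1 s1 g1) ->
     R1 <= log2 (1 + gamma11 P1 s1 g1') ->
     T1 (INR N) R1 R2 P1 P2 s1 g1 <= T1 (INR N) R1 R2 P1 P2 s1 g1') /\
  (forall g2 g2' : R, 0 < g2 -> g2 <= g2' ->
     T2 (INR N) R2 P1 P2 s2 g2 <= T2 (INR N) R2 P1 P2 s2 g2').
Proof.
intros _ HR1 HR2 HP1 HP2 Hs1 Hs2.
pose proof (pos_INR N) as HN.
split.
- intros g1 g1' Hg Hgg _ _; unfold T1.
  apply Rmult_le_compat_l; [exact HR1|].
  pose proof (eps1_antitone (INR N) R1 R2 P1 P2 s1 HN HR1 HR2 HP1 HP2 Hs1 g1 g1' Hg Hgg).
  lra.
- intros g2 g2' Hg Hgg; unfold T2.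
  apply Rmult_le_compat_l; [exact HR2|].
  pose proof (eps2_antitone (INR N) R2 P1 P2 s2 g2 g2' HN HR2 HP1 HP2 Hs2 Hg Hgg).
  lra.
Qed.
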